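(* Let $K\subset\mathbb{R}$ be a real cubic number field with norm map $N=N_{K/\mathbb{Q}}$. Let $p,q$ be positive integers with $\gcd(p,q)=1$ and $p\not\equiv 0 \pmod 3$. Then for all $\alpha,\beta\in K\setminus\mathbb{Q}$ with $\alpha,\beta>0$, \[ \frac{|N(\alpha)|}{\alpha^{p/q}}=\frac{|N(\beta)|}{\beta^{p/q}}\quad\text{implies}\quad \alpha=\beta . \]
   Context: Here $\alpha^{p/q}$ denotes the positive real $(p/q)$-th power of the positive real number $\alpha$. *)

From HB Require Import structures.
From mathcomp Require Import all_boot all_order all_algebra.
From mathcomp Require Import all_classical all_reals all_analysis.
Set Implicit Arguments. Unset Strict Implicit. Unset Printing Implicit Defensive.
Import Order.TTheory GRing.Theory Num.Theory.
Local Open Scope ring_scope.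

Definition is_subfield (R : realType) (K : R -> Prop) : Prop :=
  [/\ K 1,
      (forall x y, K x -> K y -> K (x - y)),
      (forall x y, K x -> K y -> K (x * y)) &
      (forall x, K x -> x != 0 -> K x^-1)].

Definition is_rational (R : realType) (x : R) : Prop := exists r : rat, x = ratr r.

Definition is_Qbasis3 (R : realType) (K : R -> Prop) (e : 'I_3 -> R) : Prop :=
  [/\ (forall i, K (e i)),
      (forall x, K x -> exists c : 'I_3 -> rat, x = \sum_(i < 3) ratr (c i) * e i) &
      (forall c : 'I_3 -> rat, \sum_(i < 3) ratr (c i) * e i = 0 -> forall i, c i = 0)].

Definition real_cubic_field (R : realType) (K : R -> Prop) : Prop :=
  is_subfield K /\ exists e, is_Qbasis3 K e.

(* M is the (rational) matrix of multiplication by a in the basis e: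
   a * e_i = sum_j M_ij e_j.  The norm N_{K/Q}(a) is det M (independent of e). *)
Definition mult_matrix (R : realType) (e : 'I_3 -> R) (a : R) (M : 'M[rat]_3) : Prop :=
  forall i : 'I_3, a * e i = \sum_(j < 3) ratr (M i j) * e j.

Definition is_norm (R : realType) (K : R -> Prop) (a : R) (n : rat) : Prop :=
  exists e M, is_Qbasis3 K e /\ mult_matrix e a M /\ n = \det M.

From HB Require Import structures.
From mathcomp Require Import all_boot all_order all_algebra.
From mathcomp Require Import all_classical all_reals all_analysis.
Import Order.TTheory GRing.Theory Num.Theory.
Set Implicit Arguments. Unset Strict Implicit.
Local Open Scope ring_scope.

(* Clearing denominators and raising to the q-th power turns the hypothesis
   into a^q beta^p = b^q alpha^p with a = |N(alpha)|, b = |N(beta)|.  The norm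
   is multiplicative and N(c) = c^3 for rational c, so taking norms gives
   a^(3q) b^p = b^(3q) a^p; since p <> 3q this forces a = b, hence
   alpha^p = beta^p and alpha = beta. *)

Lemma eq_cross_exprn (R : realDomainType) (a b : R) (m n : nat) :
  0 < a -> 0 < b -> m != n -> a ^+ m * b ^+ n = b ^+ m * a ^+ n -> a = b.
Proof.
move=> a_gt0 b_gt0 ne_mn; wlog lt_mn : m n ne_mn / (m < n)%N.
  move=> wlog_lt E; case: (ltngtP m n) => [lt_mn|lt_nm|eq_mn].
  - exact: wlog_lt E.
  - by apply: (wlog_lt n m); [rewrite eq_sym | | rewrite mulrC -E mulrC].
  - by rewrite eq_mn eqxx in ne_mn.
rewrite -(subnKC (ltnW lt_mn)) !exprD => E.
have ab_neq0 : a ^+ m * b ^+ m != 0 by rewrite mulf_neq0 ?expf_neq0 ?gt_eqF.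
have /(mulfI ab_neq0)/eqP : a ^+ m * b ^+ m * b ^+ (n - m) = a ^+ m * b ^+ m * a ^+ (n - m).
  by rewrite -mulrA E mulrCA mulrA.
by rewrite eqrXn2 ?subn_gt0 ?ltW // => /eqP.
Qed.

Lemma coord_mulmx (R : numFieldType) m n (v : 'I_m -> R) (w u : 'I_n -> R)
    (X : 'M[rat]_(m, n)) (Y : 'M[rat]_n) :
  (forall i, v i = \sum_(j < n) ratr (X i j) * w j) ->
  (forall j, w j = \sum_(k < n) ratr (Y j k) * u k) ->
  forall i, v i = \sum_(k < n) ratr ((X *m Y) i k) * u k.
Proof.
move=> vX wY i; rewrite vX.
under eq_bigr => j _ do rewrite wY mulr_sumr.
rewrite exchange_big /=; apply: eq_bigr => k _.
rewrite mxE rmorph_sum mulr_suml; apply: eq_bigr => j _.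
by rewrite rmorphM mulrA.
Qed.

Section MultMatrix.
Variables (R : realType) (K : R -> Prop).
Implicit Types (e f : 'I_3 -> R) (x y : R) (A B : 'M[rat]_3).

Lemma basis_coord_inj e m (X Y : 'M[rat]_(m, 3)) : is_Qbasis3 K e ->
  (forall i, \sum_(k < 3) ratr (X i k) * e k = \sum_(k < 3) ratr (Y i k) * e k) ->
  X = Y.
Proof.
case=> _ _ e_free XY; apply/matrixP => i k; apply/eqP; rewrite -subr_eq0; apply/eqP.
apply: (e_free (fun k => X i k - Y i k)).
under eq_bigr => j _ do rewrite rmorphB mulrBl.
by rewrite sumrB XY subrr.
Qed.

Lemma mult_matrix1 e : mult_matrix e 1 1%:M.
Proof.
move=> i; rewrite mul1r (bigD1 i) //= big1 ?addr0; first by rewrite mxE eqxx rmorph1 mul1r.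
by move=> j /negbTE ji; rewrite mxE eq_sym ji rmorph0 mul0r.
Qed.

Lemma mult_matrixM e x y A B : mult_matrix e x A -> mult_matrix e y B ->
  mult_matrix e (x * y) (B *m A).
Proof.
move=> xA yB; apply: (coord_mulmx (w := fun j => x * e j)) => // i.
by rewrite -mulrA yB mulr_sumr; apply: eq_bigr => j _; rewrite mulrCA.
Qed.

Lemma mult_matrixX e x A k :
  mult_matrix e x A -> mult_matrix e (x ^+ k) (A ^+ k).
Proof.
move=> xA; elim: k => [|k IHk]; first exact: mult_matrix1.
by rewrite exprS exprSr -mulmxE; apply: mult_matrixM.
Qed.

Lemma mult_matrixZ e x A c :
  mult_matrix e x A -> mult_matrix e (ratr c * x) (c *: A).
Proof.
move=> xA i; rewrite -mulrA xA mulr_sumr; apply: eq_bigr => j _.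
by rewrite mxE rmorphM mulrA.
Qed.

Lemma basis_change e f : is_Qbasis3 K e -> (forall i, K (f i)) ->
  exists P : 'M[rat]_3, forall i, f i = \sum_(j < 3) ratr (P i j) * e j.
Proof.
move=> [_ e_span _] f_K.
have /choice [c fc] : forall i : 'I_3, exists c : 'I_3 -> rat,
  f i = \sum_(j < 3) ratr (c j) * e j by move=> i; apply: e_span.
by exists (\matrix_(i, j) c i j) => i; rewrite fc; apply: eq_bigr => j _; rewrite mxE.
Qed.

Lemma det_mult_matrix_neq0 e x A : is_Qbasis3 K e -> mult_matrix e x A ->
  x != 0 -> \det A != 0.
Proof.
move=> e_basis xA x_neq0; apply/negP => /det0P [v v_neq0 vA].
have [_ _ e_free] := e_basis.
pose y := \sum_(i < 3) ratr (v 0 i) * e i.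
have xy_coord : forall i : 'I_1, x * y = \sum_(k < 3) ratr ((v *m A) i k) * e k.
  apply: (coord_mulmx (w := fun j => x * e j) (v := fun _ => x * y)) => //= j.
  by rewrite /y mulr_sumr; apply: eq_bigr => k _; rewrite (ord1 j) mulrCA.
have /eqP : x * y = 0.
  by rewrite (xy_coord 0) vA; apply: big1 => k _; rewrite mxE rmorph0 mul0r.
rewrite mulf_eq0 (negbTE x_neq0) /= => /eqP y0.
move/negP: v_neq0; apply; apply/eqP/matrixP => i k; rewrite (ord1 i) mxE.
exact: (e_free (fun k => v 0 k) y0 k).
Qed.

Lemma det_mult_matrix_indep e f x A B : is_Qbasis3 K e -> is_Qbasis3 K f ->
  mult_matrix e x A -> mult_matrix f x B -> \det A = \det B.
Proof.
move=> e_basis f_basis xA xB.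
have [e_K _ _] := e_basis; have [f_K _ _] := f_basis.
have [P fP] := basis_change e_basis f_K.
have [Q eQ] := basis_change f_basis e_K.
have /mulmx1_unit [P_unit _] : P *m Q = 1%:M.
  apply: (basis_coord_inj f_basis) => i.
  by rewrite -(coord_mulmx fP eQ) -(mult_matrix1 f) mul1r.
have PA_BP : P *m A = B *m P.
  have xf_PA : forall i, x * f i = \sum_(k < 3) ratr ((P *m A) i k) * e k.
    apply: (coord_mulmx (w := fun j => x * e j)) => // i.
    by rewrite fP mulr_sumr; apply: eq_bigr => k _; rewrite mulrCA.
  have xf_BP := coord_mulmx (v := fun i => x * f i) xB fP.
  by apply: (basis_coord_inj e_basis) => i; rewrite -xf_PA -xf_BP.
move: (congr1 determinant PA_BP); rewrite !det_mulmx mulrC => /mulIf; apply.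
by rewrite -unitfE -unitmxE.
Qed.

End MultMatrix.

Lemma detX (R : comPzRingType) n (A : 'M[R]_n.+1) k : \det (A ^+ k) = \det A ^+ k.
Proof.
elim: k => [|k IHk]; first by rewrite !expr0 det1.
by rewrite exprS -mulmxE det_mulmx IHk exprS.
Qed.

Section Norm.
Variables (R : realType) (K : R -> Prop).

Lemma is_norm_uniq x n m : is_norm K x n -> is_norm K x m -> n = m.
Proof.
by move=> [e [A [e_basis [xA ->]]]] [f [B [f_basis [xB ->]]]];
  exact: det_mult_matrix_indep e_basis f_basis xA xB.
Qed.

Lemma is_norm_neq0 x n : is_norm K x n -> x != 0 -> n != 0.
Proof. by move=> [e [A [e_basis [xA ->]]]]; exact: det_mult_matrix_neq0 e_basis xA. Qed.

Lemma is_normZX x n c k :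
  is_norm K x n -> is_norm K (ratr c * x ^+ k) (c ^+ 3 * n ^+ k).
Proof.
move=> [e [A [e_basis [xA ->]]]]; exists e, (c *: A ^+ k).
by split=> //; split; [exact/mult_matrixZ/mult_matrixX | rewrite detZ detX].
Qed.

End Norm.

Lemma powR_fracK (R : realType) (t : R) (p q : nat) : 0 <= t -> (0 < q)%N ->
  (t `^ (p%:R / q%:R)) ^+ q = t ^+ p.
Proof.
move=> t_ge0 q_gt0; rewrite -powR_mulrn ?powR_ge0 // -powRrM divfK ?powR_mulrn //.
by rewrite pnatr_eq0 -lt0n.
Qed.

Theorem lemma2p1 (R : realType) (K : R -> Prop) (p q : nat) :
  real_cubic_field K ->
  (0 < p)%N -> (0 < q)%N -> coprime p q -> (p %% 3 != 0)%N ->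
  forall (alpha beta : R) (Na Nb : rat),
    K alpha -> K beta -> ~ is_rational alpha -> ~ is_rational beta ->
    0 < alpha -> 0 < beta ->
    is_norm K alpha Na -> is_norm K beta Nb ->
    `|ratr Na| / alpha `^ (p%:R / q%:R) = `|ratr Nb| / beta `^ (p%:R / q%:R) ->
    alpha = beta.
Proof.
move=> _ p_gt0 q_gt0 _ p_mod3 alpha beta Na Nb _ _ _ _ alpha_gt0 beta_gt0 Na_norm Nb_norm.
rewrite -!ratr_norm; set s := _ / _; set a := `|Na|; set b := `|Nb| => Heq.
have a_gt0 : 0 < a by rewrite normr_gt0 (is_norm_neq0 Na_norm) ?gt_eqF.
have b_gt0 : 0 < b by rewrite normr_gt0 (is_norm_neq0 Nb_norm) ?gt_eqF.
have cross : ratr (a ^+ q) * beta ^+ p = ratr (b ^+ q) * alpha ^+ p.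
  have powR_neq0 (t : R) : 0 < t -> t `^ s != 0 by move=> t_gt0; rewrite gt_eqF ?powR_gt0.
  move/eqP: Heq; rewrite eqr_div ?powR_neq0 // => /eqP Heq.
  rewrite !rmorphXn -(powR_fracK p (ltW alpha_gt0) q_gt0).
  by rewrite -(powR_fracK p (ltW beta_gt0) q_gt0) -!exprMn Heq.
have norm_cross : (a ^+ q) ^+ 3 * Nb ^+ p = (b ^+ q) ^+ 3 * Na ^+ p.
  apply: is_norm_uniq (is_normZX (a ^+ q) p Nb_norm) _.
  by rewrite cross; exact: is_normZX.
have ab : a = b.
  apply: (eq_cross_exprn a_gt0 b_gt0 (m := (q * 3)%N) (n := p)).
    by apply: contra p_mod3 => /eqP <-; rewrite modnMl.
  move/(congr1 Num.norm): norm_cross.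
  rewrite [LHS]normrM [RHS]normrM !normrX.
  by rewrite (ger0_norm (ltW a_gt0)) (ger0_norm (ltW b_gt0)) -!exprM.
have bq_neq0 : ratr (b ^+ q) != 0 :> R by rewrite fmorph_eq0 expf_neq0 ?gt_eqF.
move: cross; rewrite ab => /(mulfI bq_neq0)/eqP.
by rewrite eqrXn2 ?ltW // => /eqP.
Qed.
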